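(* Let $L\in\mathbb R^{N\times N}$ be symmetric positive semidefinite with eigenvalues $0=\lambda_1<\lambda_2\le\cdots\le\lambda_N$ and orthonormal eigenvectors $u_1,\dots,u_N$ (so $\ker L = \mathrm{span}(u_1)$). Let $P\in\mathbb R^{n\times N}$ have full row rank, let $P^+$ be its Moore–Penrose pseudoinverse, $\Pi = P^+P$, and suppose $\Pi u_1 = u_1$. Let $L_c = (P^+)^\top L P^+$ with eigenvalues $\tilde\lambda_1\le\cdots\le\tilde\lambda_n$, $\gamma_1 = \lambda_{\min}((PP^\top)^{-1})$, $\gamma_2 = \lambda_{\max}((PP^\top)^{-1})$. Let $k\le n$ and $\mathbf U_k = \mathrm{span}(u_1,\dots,u_k)$. If $L_c$ and $L$ are $(\mathbf U_k,\epsilon_k)$-similar and $\epsilon_k^2<\lambda_2/\lambda_k$, then $$\gamma_1\lambda_k\le\tilde\lambda_k\le\gamma_2\,\frac{(1+\epsilon_k)^2}{1-\epsilon_k^2(\lambda_k/\lambda_2)}\,\lambda_k.$$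
   Context: For PSD $M$, $\|y\|_M=\sqrt{y^\top My}$. $L_c$ and $L$ are $(\mathbf R,\epsilon)$-similar if $\epsilon\ge0$ and $\|x-P^+Px\|_L\le\epsilon\|x\|_L$ for all $x\in\mathbf R$. *)

From HB Require Import structures.
From mathcomp Require Import all_boot all_order all_algebra.
Set Implicit Arguments. Unset Strict Implicit. Unset Printing Implicit Defensive.
Import Order.TTheory GRing.Theory Num.Theory.
Local Open Scope ring_scope.

Definition mnorm (R : rcfType) (N : nat) (M : 'M[R]_N) (y : 'cV[R]_N) : R :=
  Num.sqrt ((y^T *m M *m y) 0 0).

Definition is_pinv (R : rcfType) (n N : nat) (P : 'M[R]_(n, N)) (X : 'M[R]_(N, n)) : Prop :=
  [/\ P *m X *m P = P, X *m P *m X = X,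
      (P *m X)^T = P *m X & (X *m P)^T = X *m P].

(* x lies in span(u_1,...,u_k) (vectors indexed from 0: u 0, ..., u (k-1)) *)
Definition in_span (R : rcfType) (N : nat) (u : nat -> 'cV[R]_N) (k : nat) (x : 'cV[R]_N) : Prop :=
  exists c : nat -> R, x = \sum_(i < k) c i *: u i.

Definition coarse_similar (R : rcfType) (n N : nat) (L : 'M[R]_N) (P : 'M[R]_(n, N))
    (Pp : 'M[R]_(N, n)) (S : 'cV[R]_N -> Prop) (eps : R) : Prop :=
  0 <= eps /\ forall x, S x -> mnorm L (x - Pp *m P *m x) <= eps * mnorm L x.

From HB Require Import structures.
From mathcomp Require Import all_boot all_order all_algebra.
From mathcomp Require Import complex ring lra.
Import Order.TTheory GRing.Theory Num.Theory.
Set Implicit Arguments. Unset Strict Implicit. Unset Printing Implicit Defensive.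
Local Open Scope ring_scope.

(* Both bounds are Courant-Fischer dimension counts.  For the lower bound pick a
   nonzero x in span(v_1..v_k) with P^+ x orthogonal to u_1..u_(k-1); then
   mu_k |x|^2 >= x^T L_c x = (P^+ x)^T L (P^+ x) >= lam_k |P^+ x|^2 >= lam_k gamma1 |x|^2.
   For the upper bound pick a nonzero y in U_k with P y orthogonal to
   v_1..v_(k-1), and split y = Pi y + e.  Similarity bounds the L-seminorms of e
   and of Pi y by eps |y|_L and (1 + eps) |y|_L; since Pi u_1 = u_1, e is
   orthogonal to ker L, so lam_2 |e|^2 <= eps^2 lam_k |y|^2, and Pythagoras gives
   |P^+ P y|^2 >= (1 - eps^2 lam_k / lam_2) |y|^2 while |P^+ P y|^2 <= gamma2 |P y|^2.
   The constants gamma1, gamma2 enter through (P P^T)^-1 = (P^+)^T P^+, the Gram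
   matrix of P^+. *)

Section Forms.
Variable R : rcfType.

Definition dotv m (x y : 'cV[R]_m) : R := (x^T *m y) 0 0.
Definition qform m (A : 'M[R]_m) (x : 'cV[R]_m) : R := (x^T *m A *m x) 0 0.
Definition psdmx m (A : 'M[R]_m) : Prop := forall x, 0 <= qform A x.

Lemma dotvE m (x y : 'cV[R]_m) : dotv x y = \sum_i x i 0 * y i 0.
Proof. by rewrite /dotv mxE; apply: eq_bigr => i _; rewrite mxE. Qed.

Lemma dotvC m (x y : 'cV[R]_m) : dotv x y = dotv y x.
Proof. by rewrite !dotvE; apply: eq_bigr => i _; rewrite mulrC. Qed.

Lemma dotvDr m (x y z : 'cV[R]_m) : dotv x (y + z) = dotv x y + dotv x z.
Proof. by rewrite /dotv mulmxDr mxE. Qed.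

Lemma dotvDl m (x y z : 'cV[R]_m) : dotv (x + y) z = dotv x z + dotv y z.
Proof. by rewrite dotvC dotvDr !(dotvC z). Qed.

Lemma dotvBr m (x y z : 'cV[R]_m) : dotv x (y - z) = dotv x y - dotv x z.
Proof. by rewrite /dotv mulmxBr !mxE. Qed.

Lemma dotvZr m (x y : 'cV[R]_m) a : dotv x (a *: y) = a * dotv x y.
Proof. by rewrite /dotv -scalemxAr mxE. Qed.

Lemma dotv_sumr m k (x : 'cV[R]_m) (c : 'I_k -> R) (y : 'I_k -> 'cV[R]_m) :
  dotv x (\sum_i c i *: y i) = \sum_i c i * dotv x (y i).
Proof.
rewrite /dotv mulmx_sumr summxE; apply: eq_bigr => i _.
by rewrite -scalemxAr mxE.
Qed.

Lemma dotv_trmx m n (B : 'M[R]_(m, n)) x y : dotv (B^T *m x) y = dotv x (B *m y).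
Proof. by rewrite /dotv trmx_mul trmxK mulmxA. Qed.

Lemma dotv_ge0 m (x : 'cV[R]_m) : 0 <= dotv x x.
Proof. by rewrite dotvE; apply: sumr_ge0 => i _; rewrite -expr2 sqr_ge0. Qed.

Lemma dotv_gt0 m (x : 'cV[R]_m) : x != 0 -> 0 < dotv x x.
Proof.
move=> xn0; rewrite lt_def dotv_ge0 andbT; apply: contra xn0 => /eqP x0.
apply/eqP/matrixP => i j; rewrite (ord1 j) mxE.
have := psumr_eq0P (P := predT) (fun i _ => sqr_ge0 (x i 0)).
by rewrite -dotvE => /(_ x0 i isT) /eqP; rewrite sqrf_eq0 => /eqP.
Qed.

Lemma qform_dotv m (A : 'M[R]_m) x : qform A x = dotv x (A *m x).
Proof. by rewrite /qform /dotv mulmxA. Qed.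

Lemma qform_mulmx m n (A : 'M[R]_m) (B : 'M[R]_(m, n)) x :
  qform A (B *m x) = qform (B^T *m A *m B) x.
Proof. by rewrite /qform trmx_mul !mulmxA. Qed.

Lemma dotv_gram m n (B : 'M[R]_(m, n)) x : dotv (B *m x) (B *m x) = qform (B^T *m B) x.
Proof. by rewrite /qform /dotv trmx_mul !mulmxA. Qed.

Lemma qform_subscalar m (A : 'M[R]_m) g x : qform (A - g%:M) x = qform A x - g * dotv x x.
Proof. by rewrite /qform /dotv mulmxBr mulmxBl mul_mx_scalar -scalemxAl !mxE. Qed.

Lemma qform_scalarsub m (A : 'M[R]_m) g x : qform (g%:M - A) x = g * dotv x x - qform A x.
Proof. by rewrite /qform /dotv mulmxBr mulmxBl mul_mx_scalar -scalemxAl !mxE. Qed.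

(* Spectral theorem over the complexification [R[i]]. *)
Lemma qform_ge0_eigen_ge0 m (A : 'M[R]_m) : A^T = A ->
  (forall a, eigenvalue A a -> 0 <= a) -> psdmx A.
Proof.
move=> AT Aeig x.
pose f := real_complex R.
have freal r : f r \is Num.real by apply/complex_realP; exists r.
pose Ac := map_mx f A.
have herm : Ac \is hermsymmx.
  apply/is_hermitianmxP; rewrite expr0 scale1r.
  by apply/matrixP => i j; rewrite !mxE conj_Creal ?freal // -{1}AT mxE.
set U := spectralmx Ac; set d := spectral_diag Ac.
have Uu : U \is unitarymx := spectral_unitarymx Ac.
have /orthomx_spectralP AcE := hermitian_normalmx herm.
rewrite invmx_unitary // in AcE.
have d_ge0 i : 0 <= d 0 i.
  have [r dr] := complex_realP _ (mxOverP (hermitian_spectral_diag_real herm) 0 i).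
  rewrite dr ler0c; apply: Aeig.
  rewrite eigenvalue_root_char -(fmorph_root f) map_char_poly -eigenvalue_root_char.
  apply/eigenvalueP; exists (row i U).
    rewrite -row_mul -/Ac AcE !mulmxA (unitarymxP Uu) mul1mx row_mul row_diag_mx.
    by rewrite -scalemxAl -rowE dr.
  rewrite rowE mulmx_free_eq0; last by rewrite /row_free mxrank_unitary.
  by apply/eqP => /matrixP /(_ 0 i); rewrite !mxE !eqxx /= => /eqP; rewrite oner_eq0.
rewrite -ler0c.
have -> : real_complex R (qform A x) = ((map_mx f x)^T *m Ac *m map_mx f x) 0 0.
  by rewrite map_trmx -!map_mxM [RHS]mxE.
set xc := map_mx f x; set w := U *m xc.
have wE : xc^T *m (U ^t*)%sesqui = (w ^t*)%sesqui.
  rewrite /w trmx_mul map_mxM; congr (_ *m _).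
  by apply/matrixP => i j; rewrite !mxE; symmetry; apply: conj_Creal; apply: freal.
rewrite AcE !mulmxA wE -mulmxA mxE.
apply: sumr_ge0 => j _; rewrite mul_mx_diag !mxE mulrC mulrA.
exact: mulr_ge0 (mul_conjC_ge0 _) (d_ge0 j).
Qed.

Lemma qform_ge_eigen m (A : 'M[R]_m) g : A^T = A ->
  (forall a, eigenvalue A a -> g <= a) -> forall x, g * dotv x x <= qform A x.
Proof.
move=> AT Ag x; rewrite -subr_ge0 -qform_subscalar.
apply: qform_ge0_eigen_ge0; first by rewrite linearB /= AT tr_scalar_mx.
move=> a /eigenvalueP [w]; rewrite mulmxBr mul_mx_scalar => /eqP.
rewrite subr_eq -scalerDl => /eqP wA wn0.
by rewrite -(lerD2r g) add0r; apply: Ag; apply/eigenvalueP; exists w.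
Qed.

Lemma qform_le_eigen m (A : 'M[R]_m) g : A^T = A ->
  (forall a, eigenvalue A a -> a <= g) -> forall x, qform A x <= g * dotv x x.
Proof.
move=> AT Ag x; rewrite -subr_ge0 -qform_scalarsub.
apply: qform_ge0_eigen_ge0; first by rewrite linearB /= AT tr_scalar_mx.
move=> a /eigenvalueP [w]; rewrite mulmxBr mul_mx_scalar => wA wn0.
have wA' : w *m A = (g - a) *: w by rewrite scalerBl -wA opprB addrCA subrr addr0.
by rewrite -(lerD2l (g - a)) subrK addr0; apply: Ag; apply/eigenvalueP; exists w.
Qed.

End Forms.

Section Eigenbases.
Variable R : rcfType.

Definition orthonormal m k (u : nat -> 'cV[R]_m) : Prop :=
  forall i j, (i < k)%N -> (j < k)%N -> dotv (u i) (u j) = (i == j)%:R.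

Definition eigenbasis m (A : 'M[R]_m) (lam : nat -> R) (u : nat -> 'cV[R]_m) : Prop :=
  [/\ forall i, (i < m)%N -> A *m u i = lam i *: u i,
      orthonormal m u
    & forall i j, (i <= j)%N -> (j < m)%N -> lam i <= lam j].

Lemma orthonormalW m k k' (u : nat -> 'cV[R]_m) :
  (k' <= k)%N -> orthonormal k u -> orthonormal k' u.
Proof. by move=> le_k'k hu i j hi hj; apply: hu; apply: leq_trans le_k'k. Qed.

Definition colmx m k (u : nat -> 'cV[R]_m) : 'M[R]_(m, k) :=
  \matrix_(i < m, l < k) u l i 0.

Lemma colmxE m k (u : nat -> 'cV[R]_m) (c : 'cV[R]_k) :
  colmx k u *m c = \sum_(l < k) c l 0 *: u l.
Proof.
apply/matrixP => i j; rewrite (ord1 j) !mxE summxE.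
by apply: eq_bigr => l _; rewrite !mxE mulrC.
Qed.

Lemma colmx_orthonormal m k (u : nat -> 'cV[R]_m) :
  orthonormal k u -> (colmx k u)^T *m colmx k u = 1%:M.
Proof.
move=> hu; apply/matrixP => a b; rewrite !mxE -(hu a b) // dotvE.
by apply: eq_bigr => i _; rewrite !mxE.
Qed.

Lemma colmx_neq0 m k (u : nat -> 'cV[R]_m) (c : 'cV[R]_k) :
  orthonormal k u -> c != 0 -> colmx k u *m c != 0.
Proof.
move=> hu; apply: contra => /eqP uc0.
by rewrite -[c]mul1mx -(colmx_orthonormal hu) -mulmxA uc0 mulmx0.
Qed.

Lemma in_span_colmx m k (u : nat -> 'cV[R]_m) (c : 'cV[R]_k) : in_span u k (colmx k u *m c).
Proof.
exists (fun l => if insub l is Some i then c i 0 else 0); rewrite colmxE.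
by apply: eq_bigr => l _; rewrite valK.
Qed.

Lemma in_span_dotv m k (u : nat -> 'cV[R]_m) x l :
  orthonormal m u -> in_span u k x -> (k <= l)%N -> (l < m)%N -> dotv (u l) x = 0.
Proof.
move=> hu [c ->] le_kl lt_lm; rewrite dotv_sumr big1 // => i _.
have lt_il : (i < l)%N := leq_trans (ltn_ord i) le_kl.
by rewrite hu ?(ltn_trans lt_il) // eq_sym (ltn_eqF lt_il) mulr0.
Qed.

Lemma exists_kernel_vector (F : fieldType) j k (B : 'M[F]_(j, k)) :
  (j < k)%N -> exists2 c : 'cV_k, c != 0 & B *m c = 0.
Proof.
move=> lt_jk; set K := kermx B^T.
have K_neq0 : K != 0.
  rewrite -mxrank_eq0 mxrank_ker mxrank_tr subn_eq0 -ltnNge.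
  exact: leq_ltn_trans (rank_leq_row B) lt_jk.
have [i Ki_neq0] : exists i, row i K != 0.
  apply/existsP; move: K_neq0; apply: contraR; rewrite negb_exists => /forallP K0.
  by apply/eqP/row_matrixP => i; rewrite row0; apply/eqP/negPn/K0.
exists (row i K)^T; first by rewrite trmx_eq0.
by rewrite -[B]trmxK -trmx_mul -row_mul mulmx_ker row0 trmx0.
Qed.

Lemma exists_in_span_orthogonal m k (v w : nat -> 'cV[R]_m) :
  orthonormal k.+1 v ->
  exists2 x, x != 0 & in_span v k.+1 x /\ forall l, (l < k)%N -> dotv (w l) x = 0.
Proof.
move=> hv; set B := \matrix_(l < k, i < m) w l i 0.
have [c c_neq0 Bc0] := exists_kernel_vector (B *m colmx k.+1 v) (ltnSn k).
exists (colmx k.+1 v *m c); first exact: colmx_neq0.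
split=> [|l lt_lk]; first exact: in_span_colmx.
move/matrixP: Bc0 => /(_ (Ordinal lt_lk) 0); rewrite -mulmxA [RHS]mxE => <-.
by rewrite dotvE mxE; apply: eq_bigr => i _; rewrite [B _ _]mxE.
Qed.

Lemma orthonormal_expansion m (u : nat -> 'cV[R]_m) y :
  orthonormal m u -> y = \sum_(l < m) dotv (u l) y *: u l.
Proof.
move=> hu; have uuT := mulmx1C (colmx_orthonormal hu).
have -> : \sum_(l < m) dotv (u l) y *: u l = colmx m u *m ((colmx m u)^T *m y).
  rewrite colmxE; apply: eq_bigr => l _; congr (_ *: _).
  by rewrite dotvE mxE; apply: eq_bigr => i _; rewrite !mxE.
by rewrite mulmxA uuT mul1mx.
Qed.

Section Rayleigh.
Variables (m : nat) (A : 'M[R]_m) (lam : nat -> R) (u : nat -> 'cV[R]_m).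
Hypothesis hA : eigenbasis A lam u.

Lemma qform_eigen_expansion y :
  qform A y = \sum_(l < m) dotv (u l) y ^+ 2 * lam l /\
  dotv y y = \sum_(l < m) dotv (u l) y ^+ 2.
Proof.
have [Au hu _] := hA; have ye := orthonormal_expansion y hu.
split; last by rewrite {1}ye dotvC dotv_sumr; apply: eq_bigr => l _; rewrite dotvC.
rewrite qform_dotv; have -> : A *m y = \sum_(l < m) (dotv (u l) y * lam l) *: u l.
  rewrite {1}ye mulmx_sumr; apply: eq_bigr => l _.
  by rewrite -scalemxAr Au // scalerA mulrC.
rewrite dotv_sumr; apply: eq_bigr => l _.
by rewrite dotvC; ring.
Qed.

Lemma qform_ge_orthogonal j y : (forall l, (l < j)%N -> dotv (u l) y = 0) ->
  lam j * dotv y y <= qform A y.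
Proof.
have [_ _ lam_sorted] := hA; move=> y_orth; have [-> ->] := qform_eigen_expansion y.
rewrite mulr_sumr; apply: ler_sum => l _.
case: (ltnP l j) => [lt_lj | le_jl]; first by rewrite y_orth // expr0n mul0r mulr0.
by rewrite mulrC ler_wpM2l ?sqr_ge0 ?lam_sorted.
Qed.

Lemma qform_le_in_span k y : (k < m)%N -> in_span u k.+1 y -> qform A y <= lam k * dotv y y.
Proof.
have [_ hu lam_sorted] := hA; move=> lt_km y_span.
have [-> ->] := qform_eigen_expansion y.
rewrite mulr_sumr; apply: ler_sum => l _.
case: (ltnP k l) => [lt_kl | le_lk].
  by rewrite (in_span_dotv hu y_span lt_kl) // expr0n mul0r mulr0.
by rewrite [X in _ <= X]mulrC ler_wpM2l ?sqr_ge0 ?lam_sorted.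
Qed.

End Rayleigh.

Lemma psd_eigenbasis_ge0 m (A : 'M[R]_m) lam u i :
  psdmx A -> eigenbasis A lam u -> (i < m)%N -> 0 <= lam i.
Proof.
move=> A_psd [Au u_orth _] lt_im; have := A_psd (u i).
by rewrite qform_dotv Au // dotvZr u_orth // eqxx mulr1.
Qed.

End Eigenbases.

Lemma discriminant_le (R : realFieldType) (a b c : R) :
  (forall t, 0 <= a + 2 * b * t + c * t ^+ 2) -> 0 <= c -> b ^+ 2 <= a * c.
Proof.
move=> h; rewrite le_eqVlt => /orP [/eqP c0 | c_gt0].
  rewrite -c0 mulr0; have [-> | b_neq0] := eqVneq b 0; first by rewrite expr0n.
  have := h (- (a + 1) / (2 * b)).
  have -> : a + 2 * b * (- (a + 1) / (2 * b)) + c * (- (a + 1) / (2 * b)) ^+ 2 = -1.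
    by rewrite -c0 mul0r addr0; field.
  by rewrite oppr_ge0 ler10.
have := h (- b / c).
have -> : a + 2 * b * (- b / c) + c * (- b / c) ^+ 2 = (a * c - b ^+ 2) / c.
  by field; rewrite gt_eqF.
by rewrite ler_pdivlMr // mul0r subr_ge0.
Qed.

Lemma sqrtr_le_sqr (R : rcfType) (a c : R) : 0 <= a -> Num.sqrt a <= c -> a <= c ^+ 2.
Proof.
move=> a_ge0 le_ac; rewrite -(sqr_sqrtr a_ge0) !expr2.
by apply: ler_pM; rewrite ?sqrtr_ge0.
Qed.

Section Seminorm.
Variables (R : rcfType) (m : nat) (A : 'M[R]_m).
Hypotheses (A_sym : A^T = A) (A_psd : psdmx A).

Lemma qformDZ x y t :
  qform A (x + t *: y) = qform A x + 2 * (x^T *m A *m y) 0 0 * t + qform A y * t ^+ 2.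
Proof.
have cross : (y^T *m A *m x) 0 0 = (x^T *m A *m y) 0 0.
  have -> : y^T *m A *m x = (x^T *m A *m y)^T by rewrite !trmx_mul trmxK A_sym mulmxA.
  by rewrite mxE.
rewrite /qform !mulmxDr -!scalemxAr [(_ + _)^T]linearD /= [(_ *: _)^T]linearZ /= !mulmxDl -!scalemxAl !mxE.
move: cross; rewrite !mxE => ->; ring.
Qed.

Lemma qform_cauchy_schwarz x y : (x^T *m A *m y) 0 0 ^+ 2 <= qform A x * qform A y.
Proof. by apply: discriminant_le => [t|]; rewrite -?qformDZ; apply: A_psd. Qed.

Lemma mnormB_le x y : mnorm A (x - y) <= mnorm A x + mnorm A y.
Proof.
set b := (x^T *m A *m y) 0 0.
have b_le : - b <= mnorm A x * mnorm A y.
  rewrite -sqrtrM ?A_psd //; apply: le_trans (ler_norm _) _.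
  by rewrite normrN -sqrtr_sqr ler_wsqrtr ?qform_cauchy_schwarz.
have sum_ge0 : 0 <= mnorm A x + mnorm A y by rewrite addr_ge0 ?sqrtr_ge0.
rewrite -(ger0_norm sum_ge0) -sqrtr_sqr ler_wsqrtr //.
rewrite -/(qform A (x - y)) -scaleN1r qformDZ sqrrD !sqr_sqrtr ?A_psd // -/b -/(qform A x) -/(qform A y) sqrrN expr1n mulr2n; lra.
Qed.

End Seminorm.

Lemma coarse_similar_qform (R : rcfType) n N (L : 'M[R]_N) (P : 'M[R]_(n, N)) Pp S eps y :
  L^T = L -> psdmx L -> coarse_similar L P Pp S eps -> S y ->
  qform L (y - Pp *m P *m y) <= eps ^+ 2 * qform L y /\
  qform L (Pp *m P *m y) <= (1 + eps) ^+ 2 * qform L y.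
Proof.
move=> L_sym L_psd [eps_ge0 sim] Sy; have err_le := sim y Sy.
have norm_sqr c : (c * mnorm L y) ^+ 2 = c ^+ 2 * qform L y.
  by rewrite exprMn sqr_sqrtr //; apply: L_psd.
split; first by rewrite -norm_sqr; apply: sqrtr_le_sqr.
rewrite -norm_sqr; apply: sqrtr_le_sqr => //.
have -> : Pp *m P *m y = y - (y - Pp *m P *m y) by rewrite subKr.
rewrite mulrDl mul1r; apply: le_trans (mnormB_le L_sym L_psd _ _) _.
by rewrite lerD2l.
Qed.

Lemma orthoproj_pythagoras (R : rcfType) m (Q : 'M[R]_m) y : Q^T = Q -> Q *m Q = Q ->
  dotv y y = dotv (Q *m y) (Q *m y) + dotv (y - Q *m y) (y - Q *m y).
Proof.
move=> Q_sym Q_idem; set e := y - Q *m y.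
have Qy_e : dotv (Q *m y) e = 0.
  by rewrite /dotv trmx_mul Q_sym mulmxBr !mulmxA -(mulmxA _ Q Q) Q_idem subrr mxE.
have ye : y = Q *m y + e by rewrite addrC subrK.
clearbody e; rewrite {1 2}ye !dotvDl !dotvDr (dotvC e) Qy_e; ring.
Qed.

Section Pseudoinverse.
Variables (R : rcfType) (n N : nat) (P : 'M[R]_(n, N)) (Pp : 'M[R]_(N, n)).
Hypothesis P_pinv : is_pinv P Pp.

Lemma pinv_proj_idem : Pp *m P *m (Pp *m P) = Pp *m P.
Proof. by have [_ PpPPp _ _] := P_pinv; rewrite mulmxA PpPPp. Qed.

Hypothesis P_full : \rank P = n.

Lemma pinv_right_inverse : P *m Pp = 1%:M.
Proof.
have [PPpP _ _ _] := P_pinv; apply/eqP; rewrite -subr_eq0; apply/eqP.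
have : (P *m Pp - 1%:M) *m P = 0 by rewrite mulmxBl PPpP mul1mx subrr.
by move/eqP; rewrite mulmx_free_eq0 ?/row_free ?P_full // => /eqP.
Qed.

Lemma pinv_gram : invmx (P *m P^T) = Pp^T *m Pp.
Proof.
have [_ _ _ PpP_sym] := P_pinv.
have GPp : Pp^T *m Pp *m (P *m P^T) = 1%:M.
  rewrite mulmxA -(mulmxA _ Pp P) -PpP_sym trmx_mul !mulmxA -trmx_mul.
  by rewrite pinv_right_inverse trmx1 mul1mx -trmx_mul pinv_right_inverse trmx1.
have [_ G_unit] := mulmx1_unit GPp.
by rewrite -[invmx _]mul1mx -GPp -(mulmxA (Pp^T *m Pp)) mulmxV // mulmx1.
Qed.

End Pseudoinverse.

Lemma eigen_pullback_ge (R : rcfType) m n (A : 'M[R]_m) lam u (Q : 'M[R]_(m, n)) mu v g k :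
  eigenbasis A lam u -> eigenbasis (Q^T *m A *m Q) mu v ->
  (forall x, g * dotv x x <= dotv (Q *m x) (Q *m x)) ->
  (k < n)%N -> 0 <= lam k -> g * lam k <= mu k.
Proof.
move=> hA hC Q_lb lt_kn lamk_ge0; have [_ v_orth _] := hC.
have [x x_neq0 [x_span x_orth]] :=
  exists_in_span_orthogonal (fun l => Q^T *m u l) (orthonormalW lt_kn v_orth).
have Qx_ge : lam k * dotv (Q *m x) (Q *m x) <= qform A (Q *m x).
  by apply: (qform_ge_orthogonal hA) => l lt_lk; rewrite -dotv_trmx x_orth.
have Cx_le : qform (Q^T *m A *m Q) x <= mu k * dotv x x := qform_le_in_span hC lt_kn x_span.
rewrite -(ler_pM2r (dotv_gt0 x_neq0)); apply: le_trans Cx_le.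
rewrite -qform_mulmx; apply: le_trans Qx_ge.
by rewrite -mulrA mulrCA ler_wpM2l.
Qed.

Lemma cross_ratio_le (R : realFieldType) (l1 lk e2 mu g Q X Y : R) :
  0 < l1 -> e2 * lk < l1 -> 0 < Y -> 0 <= X -> 0 <= Q * lk ->
  mu * X <= Q * lk * Y -> (l1 - e2 * lk) * Y <= l1 * (g * X) ->
  mu <= g * (Q / (1 - e2 * (lk / l1))) * lk.
Proof.
move=> l1_gt0 T_gt0 Y_gt0 X_ge0 Qlk_ge0 mu_le Y_le; rewrite -subr_gt0 in T_gt0.
set T := l1 - e2 * lk in T_gt0 Y_le.
have X_gt0 : 0 < X.
  rewrite lt_def X_ge0 andbT; apply: contraTneq Y_le => ->.
  by rewrite mulr0 mulr0 -ltNge mulr_gt0.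
have -> : g * (Q / (1 - e2 * (lk / l1))) * lk = Q * lk * l1 * g / T.
  by rewrite /T; field; rewrite !gt_eqF.
rewrite ler_pdivlMr // -(ler_pM2r X_gt0) mulrAC.
apply: le_trans (ler_wpM2r (ltW T_gt0) mu_le) _.
rewrite -[_ * T]mulrA (mulrC Y); apply: le_trans (ler_wpM2l Qlk_ge0 Y_le) _.
by rewrite !mulrA.
Qed.

Lemma coarse_eigen_le (R : rcfType) n N (L : 'M[R]_N) lam u (P : 'M[R]_(n, N)) Pp
    mu v g eps k :
  L^T = L -> psdmx L -> eigenbasis L lam u -> eigenbasis (Pp^T *m L *m Pp) mu v ->
  is_pinv P Pp -> Pp *m P *m u 0%N = u 0%N ->
  (forall x, dotv (Pp *m x) (Pp *m x) <= g * dotv x x) ->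
  coarse_similar L P Pp (in_span u k.+1) eps ->
  (k < n)%N -> (k < N)%N -> 0 < lam 1%N -> eps ^+ 2 * lam k < lam 1%N ->
  mu k <= g * ((1 + eps) ^+ 2 / (1 - eps ^+ 2 * (lam k / lam 1%N))) * lam k.
Proof.
move=> L_sym L_psd hL hC P_pinv Pu0 Pp_ub sim lt_kn lt_kN lam1_gt0 eps_lt.
have [_ u_orth _] := hL; have [_ _ _ Pi_sym] := P_pinv.
have [y y_neq0 [y_span y_orth]] :=
  exists_in_span_orthogonal (fun l => P^T *m v l) (orthonormalW lt_kN u_orth).
set x := P *m y; set e := y - Pp *m P *m y.
have Pi_y : Pp *m P *m y = Pp *m x by rewrite mulmxA.
have [e_le Piy_le] := coarse_similar_qform L_sym L_psd sim y_span.
have y_le : qform L y <= lam k * dotv y y := qform_le_in_span hL lt_kN y_span.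
have x_ge : mu k * dotv x x <= qform L (Pp *m x).
  rewrite qform_mulmx; apply: (qform_ge_orthogonal hC) => l lt_lk.
  by rewrite -dotv_trmx y_orth.
have e_ge : lam 1%N * dotv e e <= qform L e.
  apply: (qform_ge_orthogonal hL) => l; rewrite ltnS leqn0 => /eqP ->.
  by rewrite dotvBr -dotv_trmx Pi_sym Pu0 subrr.
have lamk_ge0 := psd_eigenbasis_ge0 L_psd hL lt_kN.
have mu_le : mu k * dotv x x <= (1 + eps) ^+ 2 * lam k * dotv y y.
  apply: le_trans x_ge _; rewrite -Pi_y; apply: le_trans Piy_le _.
  by rewrite -mulrA ler_wpM2l ?sqr_ge0.
have proj_ge : (lam 1%N - eps ^+ 2 * lam k) * dotv y y <= lam 1%N * (g * dotv x x).
  have e_small : lam 1%N * dotv e e <= eps ^+ 2 * lam k * dotv y y.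
    apply: le_trans e_ge (le_trans e_le _).
    by rewrite -mulrA ler_wpM2l ?sqr_ge0.
  have Pix_le := ler_wpM2l (ltW lam1_gt0) (Pp_ub x).
  rewrite mulrBl {1}(orthoproj_pythagoras y Pi_sym (pinv_proj_idem P_pinv)) -/e Pi_y mulrDr.
  lra.
apply: cross_ratio_le mu_le proj_ge => //; rewrite ?dotv_gt0 ?dotv_ge0 //.
by rewrite mulr_ge0 ?sqr_ge0.
Qed.

Theorem theorem2 (R : rcfType) (n N : nat)
  (L : 'M[R]_N) (lam : nat -> R) (u : nat -> 'cV[R]_N)
  (P : 'M[R]_(n, N)) (Pp : 'M[R]_(N, n))
  (mu : nat -> R) (v : nat -> 'cV[R]_n)
  (gamma1 gamma2 : R) (k : nat) (eps : R) :
  (1 < N)%N ->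
  L^T = L -> (forall x : 'cV[R]_N, 0 <= (x^T *m L *m x) 0 0) ->
  lam 0%N = 0 -> 0 < lam 1%N ->
  (forall i j, (1 <= i)%N -> (i <= j)%N -> (j < N)%N -> lam i <= lam j) ->
  (forall i, (i < N)%N -> L *m u i = lam i *: u i) ->
  (forall i j, (i < N)%N -> (j < N)%N -> ((u i)^T *m u j) 0 0 = (i == j)%:R) ->
  \rank P = n -> is_pinv P Pp -> Pp *m P *m u 0%N = u 0%N ->
  (forall i j, (i <= j)%N -> (j < n)%N -> mu i <= mu j) ->
  (forall i, (i < n)%N -> (Pp^T *m L *m Pp) *m v i = mu i *: v i) ->
  (forall i j, (i < n)%N -> (j < n)%N -> ((v i)^T *m v j) 0 0 = (i == j)%:R) ->
  eigenvalue (invmx (P *m P^T)) gamma1 ->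
  (forall a, eigenvalue (invmx (P *m P^T)) a -> gamma1 <= a) ->
  eigenvalue (invmx (P *m P^T)) gamma2 ->
  (forall a, eigenvalue (invmx (P *m P^T)) a -> a <= gamma2) ->
  (1 <= k)%N -> (k <= n)%N ->
  coarse_similar L P Pp (in_span u k) eps ->
  eps ^+ 2 * lam k.-1 < lam 1%N ->
  gamma1 * lam k.-1 <= mu k.-1 /\
  mu k.-1 <= gamma2 * ((1 + eps) ^+ 2 / (1 - eps ^+ 2 * (lam k.-1 / lam 1%N))) * lam k.-1.
Proof.
move=> _ L_sym L_psd lam0 lam1_gt0 lam_mono Lu u_orth P_full P_pinv Pu0
  mu_sorted Cv v_orth _ gamma1_min _ gamma2_max.
case: k => [//|k] _ lt_kn sim eps_lt /=.
have lt_kN : (k < N)%N by rewrite (leq_trans lt_kn) // -P_full rank_leq_col.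
have lam_sorted i j : (i <= j)%N -> (j < N)%N -> lam i <= lam j.
  case: i => [|i] le_ij lt_jN; last exact: lam_mono.
  rewrite lam0; case: j le_ij lt_jN => [|j] _ lt_jN; first by rewrite lam0.
  exact: le_trans (ltW lam1_gt0) (lam_mono _ _ _ _ lt_jN).
have hL : eigenbasis L lam u by split.
have hC : eigenbasis (Pp^T *m L *m Pp) mu v by split.
have G_sym : (Pp^T *m Pp)^T = Pp^T *m Pp by rewrite trmx_mul trmxK.
rewrite (pinv_gram P_pinv P_full) in gamma1_min gamma2_max.
split.
  apply: (eigen_pullback_ge hL hC) => // [x|]; last exact: psd_eigenbasis_ge0 L_psd hL lt_kN.
  by rewrite dotv_gram; apply: qform_ge_eigen.
apply: (coarse_eigen_le L_sym L_psd hL hC P_pinv Pu0) => // x.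
by rewrite dotv_gram; apply: qform_le_eigen.
Qed.
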